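(* Let $L$ spin-orbitals be indexed by $\{1,\dots,L\}$, let $1\le N_{\mathrm{occ}}<L$, and let $\Psi_0$ be the Fermi vacuum, i.e. the Slater determinant in which spin-orbitals $1,\dots,N_{\mathrm{occ}}$ are occupied and the others empty. Let $\hat C$ be a chain (product in a fixed order) of $n$ excitation operators $\hat E^a_i=\hat a^\dagger_a\hat a_i$ and $n$ deexcitation operators $\hat D^i_a=\hat a^\dagger_i\hat a_a$ ($i\le N_{\mathrm{occ}}<a$), and let $S$ be the word obtained by replacing, from left to right, each deexcitation operator by ''('' and each excitation operator by '')''. Let $N\ge1$, $K\in\{0,\dots,2n\}$, and let $\hat C^N_K$ be the chain obtained by inserting, immediately after the $K$-th (de)excitation operator of $\hat C$, the product $\hat a^\dagger_{r_1}\cdots\hat a^\dagger_{r_N}\hat a_{s_1}\cdots\hat a_{s_N}$ with arbitrary $r_1,\dots,r_N,s_1,\dots,s_N\in\{1,\dots,L\}$. If $S$ is not a Dyck word, then $\langle\Psi_0|\hat C^N_K|\Psi_0\rangle=0$.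
   Context: A Dyck word is a finite word over $\{(,)\}$ with as many opening as closing brackets, every prefix of which contains at least as many opening as closing brackets. *)

From mathcomp Require Import all_boot all_algebra.
Set Implicit Arguments. Unset Strict Implicit. Unset Printing Implicit Defensive.
Import GRing.Theory.
Local Open Scope ring_scope.

(* Spin-orbitals 1..L are represented by 'I_L (orbital p+1 <-> ordinal p).
   A Fock-space vector is a coefficient function on occupation sets
   (basis = Slater determinants |S>, orbitals ordered increasingly). *)
Definition fstate (L : nat) := {set 'I_L} -> int.

Definition fsign L (S : {set 'I_L}) (p : 'I_L) : int :=
  (-1) ^+ #|[set q in S | (q < p)%N]|.

(* creation a^dagger_p : |S> |-> fsign S p |S u {p}> if p notin S, else 0 *)
Definition cre L (p : 'I_L) (v : fstate L) : fstate L :=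
  fun T => if p \in T then fsign (T :\ p) p * v (T :\ p) else 0.

(* annihilation a_p : |S> |-> fsign S p |S \ {p}> if p in S, else 0 *)
Definition ann L (p : 'I_L) (v : fstate L) : fstate L :=
  fun T => if p \notin T then fsign (p |: T) p * v (p |: T) else 0.

Definition ladder L (o : bool * 'I_L) (v : fstate L) : fstate L :=
  if o.1 then cre o.2 v else ann o.2 v.

Definition apply_word L (w : seq (bool * 'I_L)) (v : fstate L) : fstate L :=
  foldr (@ladder L) v w.

Definition basis L (S : {set 'I_L}) : fstate L := fun T => (T == S)%:R.

Definition vacuum L (Nocc : nat) : {set 'I_L} := [set i : 'I_L | (i < Nocc)%N].

Definition expval L (Nocc : nat) (w : seq (bool * 'I_L)) : int :=
  apply_word w (basis (vacuum L Nocc)) (vacuum L Nocc).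

(* A (de)excitation operator is a triple (d, i, a):
   d = false : excitation   E^a_i = a^dagger_a a_i
   d = true  : deexcitation D^i_a = a^dagger_i a_a *)
Definition exop L := (bool * 'I_L * 'I_L)%type.

Definition valid_exop L (Nocc : nat) (e : exop L) : bool :=
  (e.1.2 < Nocc)%N && (Nocc <= e.2)%N.

Definition exop_word L (e : exop L) : seq (bool * 'I_L) :=
  let '(d, i, a) := e in
  if d then [:: (true, i); (false, a)] else [:: (true, a); (false, i)].

Definition chain_word L (C : seq (exop L)) : seq (bool * 'I_L) :=
  flatten (map (@exop_word L) C).

Definition insert_word L N (r s : 'I_N -> 'I_L) : seq (bool * 'I_L) :=
  [seq (true, r k) | k <- enum 'I_N] ++ [seq (false, s k) | k <- enum 'I_N].

Definition chain_insert L N (C : seq (exop L)) (K : nat) (r s : 'I_N -> 'I_L)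
  : seq (bool * 'I_L) :=
  chain_word (take K C) ++ insert_word r s ++ chain_word (drop K C).

Definition paren_word L (C : seq (exop L)) : seq bool := [seq e.1.1 | e <- C].

(* Dyck word over {(, )} with "(" = true, ")" = false *)
Definition is_dyck (s : seq bool) : Prop :=
  (forall k : nat, (count_mem false (take k s) <= count_mem true (take k s))%N)
  /\ count_mem true s = count_mem false s.

(* Count the particles in virtual orbitals (index >= Nocc).  An excitation
   raises this count by one and a deexcitation lowers it by one, whatever the
   orbitals involved, so a chain maps a determinant with v virtual particles
   only to determinants with v + #excitations - #deexcitations of them.  If the
   balanced bracket word S is not a Dyck word, some prefix of the chain has
   more excitations than deexcitations and the complementary suffix has more
   deexcitations.  The inserted string lies to the right of that prefix or to
   the left of that suffix.  In the first case the prefix would have to map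
   something onto the vacuum, which has no virtual particles; in the second the
   suffix would have to leave a negative number of them in the vacuum. *)
From mathcomp Require Import all_boot all_algebra zify.
Set Implicit Arguments. Unset Strict Implicit. Unset Printing Implicit Defensive.
Import GRing.Theory.
Local Open Scope ring_scope.

Definition bracket_balance (w : seq bool) : int :=
  (count_mem false w)%:Z - (count_mem true w)%:Z.

Lemma bracket_balance_cons b w :
  bracket_balance (b :: w) = (if b then -1 else 1) + bracket_balance w.
Proof. by rewrite /bracket_balance /=; case: b => /=; lia. Qed.

Lemma bracket_balance_cat w1 w2 :
  bracket_balance (w1 ++ w2) = bracket_balance w1 + bracket_balance w2.
Proof. by rewrite /bracket_balance !count_cat; lia. Qed.

Lemma count_mem_true_false (w : seq bool) :
  (count_mem true w + count_mem false w)%N = size w.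
Proof. by elim: w => //= b w IH; case: b => /=; lia. Qed.

Lemma not_dyck_bad_prefix (w : seq bool) :
  count_mem true w = count_mem false w -> ~ is_dyck w ->
  exists k, (count_mem true (take k w) < count_mem false (take k w))%N.
Proof.
move=> balanced not_dyck.
have [/existsP [k bad] | /existsPn good] :=
  boolP [exists k : 'I_(size w).+1,
           count_mem true (take k w) < count_mem false (take k w)]%N.
  by exists k.
case: not_dyck; split=> // k; rewrite leqNgt.
have [k_small | k_large] := ltnP k (size w).+1; first exact: (good (Ordinal k_small)).
by rewrite take_oversize ?balanced ?ltnn // ltnW.
Qed.

Lemma apply_word_cat L (w1 w2 : seq (bool * 'I_L)) (v : fstate L) :
  apply_word (w1 ++ w2) v = apply_word w1 (apply_word w2 v).
Proof. exact: foldr_cat. Qed.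

Lemma apply_word_zero L (w : seq (bool * 'I_L)) (v : fstate L) :
  v =1 (fun=> 0) -> apply_word w v =1 (fun=> 0).
Proof.
elim: w => [|o w IH] //= v0 T.
by rewrite /ladder /cre /ann; case: o.1; case: ifP; rewrite ?IH ?mulr0.
Qed.

Lemma chain_word_cat L (C1 C2 : seq (exop L)) :
  chain_word (C1 ++ C2) = chain_word C1 ++ chain_word C2.
Proof. by rewrite /chain_word map_cat flatten_cat. Qed.

Lemma chain_insert_prefix L N (C : seq (exop L)) K k (r s : 'I_N -> 'I_L) :
  (k <= K)%N -> exists w, chain_insert C K r s = chain_word (take k C) ++ w.
Proof.
move=> le_kK; rewrite /chain_insert -(subnKC le_kK) takeD chain_word_cat -catA.
by eexists.
Qed.

Lemma chain_insert_suffix L N (C : seq (exop L)) K k (r s : 'I_N -> 'I_L) :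
  (K <= k)%N -> exists w, chain_insert C K r s = w ++ chain_word (drop k C).
Proof.
move=> le_Kk; rewrite /chain_insert -(cat_take_drop (k - K) (drop K C)).
by rewrite drop_drop subnK // chain_word_cat !catA; eexists.
Qed.

Section VirtualParticles.

Variables (L Nocc : nat).

Definition virt (T : {set 'I_L}) : nat := #|[set p in T | (Nocc <= p)%N]|.

Lemma virt_D1 (p : 'I_L) (T : {set 'I_L}) :
  p \in T -> virt T = ((Nocc <= p) + virt (T :\ p))%N.
Proof.
move=> pT; rewrite /virt (cardsD1 p) inE pT /=; congr (_ + _)%N.
by apply: eq_card => q; rewrite !inE; case: (q == p).
Qed.

Lemma virt_vacuum : virt (vacuum L Nocc) = 0%N.
Proof.
rewrite /virt; apply/eqP; rewrite cards_eq0; apply/eqP/setP => q.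
by rewrite !inE leqNgt andNb.
Qed.

(* [apply_word w v T] is the coefficient of |T> in w|v>: every determinant
   reached by [w] has [d] more virtual particles than one it comes from. *)
Definition shifts_virt (w : seq (bool * 'I_L)) (d : int) : Prop :=
  forall v T, apply_word w v T != 0 ->
  exists2 T', v T' != 0 & (virt T)%:Z = (virt T')%:Z + d.

Definition virt_charge (o : bool * 'I_L) : int :=
  if (Nocc <= o.2)%N then (if o.1 then 1 else -1) else 0.

Lemma shifts_virt_ladder o : shifts_virt [:: o] (virt_charge o).
Proof.
case: o => [[] p] v T; rewrite /= /ladder /= /cre /ann /virt_charge /=.
- case: ifP => pT; last by rewrite eqxx.
  move=> nz; exists (T :\ p); first by apply: contraNneq nz => ->; rewrite mulr0.
  by rewrite (virt_D1 pT); case: (Nocc <= p)%N; lia.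
- case: ifPn => pT; last by rewrite eqxx.
  move=> nz; exists (p |: T); first by apply: contraNneq nz => ->; rewrite mulr0.
  rewrite (@virt_D1 p (p |: T)) ?setU11 // setU1K //.
  by case: (Nocc <= p)%N => /=; lia.
Qed.

Lemma shifts_virt_cat w1 w2 d1 d2 :
  shifts_virt w1 d1 -> shifts_virt w2 d2 -> shifts_virt (w1 ++ w2) (d1 + d2).
Proof.
move=> sh1 sh2 v T; rewrite apply_word_cat => /sh1 [T1 /sh2 [T2 nz2 eq2] eq1].
by exists T2; rewrite // eq1 eq2 -addrA (addrC d2).
Qed.

Lemma shifts_virt_word w : shifts_virt w (\sum_(o <- w) virt_charge o).
Proof.
elim: w => [|o w IH]; first by move=> v T nz; exists T; rewrite // big_nil addr0.
by rewrite big_cons; exact: shifts_virt_cat (@shifts_virt_ladder o) IH.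
Qed.

Lemma virt_charge_exop_word (e : exop L) : valid_exop Nocc e ->
  \sum_(o <- exop_word e) virt_charge o = if e.1.1 then -1 else 1.
Proof.
case: e => [[[] i] a] /andP [/= i_occ a_virt];
by rewrite /= !big_cons big_nil /virt_charge /= a_virt leqNgt i_occ.
Qed.

Lemma virt_charge_chain_word (C : seq (exop L)) : all (valid_exop Nocc) C ->
  \sum_(o <- chain_word C) virt_charge o = bracket_balance (paren_word C).
Proof.
elim: C => [|e C IH] /=; first by rewrite big_nil.
case/andP=> valid_e /IH IHC; rewrite -cat1s chain_word_cat big_cat IHC.
by rewrite /chain_word /= cats0 virt_charge_exop_word // bracket_balance_cons.
Qed.

Lemma shifts_virt_chain_word (C : seq (exop L)) : all (valid_exop Nocc) C ->
  shifts_virt (chain_word C) (bracket_balance (paren_word C)).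
Proof. by move=> validC; rewrite -virt_charge_chain_word //; exact: shifts_virt_word. Qed.

Lemma shifts_virt_bra_eq0 w d v (S : {set 'I_L}) :
  shifts_virt w d -> (virt S)%:Z < d -> apply_word w v S = 0.
Proof.
move=> sh lt_d; apply/eqP/negP => /negP /sh [T' _ eqS]; move: lt_d.
by rewrite eqS; lia.
Qed.

Lemma shifts_virt_ket_eq0 w d (S : {set 'I_L}) :
  shifts_virt w d -> (virt S)%:Z + d < 0 -> apply_word w (basis S) =1 (fun=> 0).
Proof.
move=> sh lt_d T; apply/eqP/negP => /negP /sh [T' nz eqT].
have eqS : T' = S by apply/eqP; apply: contraNT nz => /negbTE neq; rewrite /basis neq.
by move: lt_d; rewrite -eqS -eqT; lia.
Qed.

End VirtualParticles.

Theorem lemma1 (L Nocc n N K : nat) (C : seq (exop L)) (r s : 'I_N -> 'I_L) :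
  (1 <= Nocc)%N -> (Nocc < L)%N ->
  all (valid_exop Nocc) C ->
  size C = (2 * n)%N ->
  count (fun e : exop L => e.1.1) C = n ->
  (1 <= N)%N -> (K <= 2 * n)%N ->
  ~ is_dyck (paren_word C) ->
  expval Nocc (chain_insert C K r s) = 0.
Proof.
move=> _ _ valid_C size_C count_C _ _ not_dyck.
have balanced : count_mem true (paren_word C) = count_mem false (paren_word C).
  have := count_mem_true_false (paren_word C).
  rewrite size_map count_map (eq_count (a2 := fun e : exop L => e.1.1)) => [|e] /=.
    by rewrite size_C count_C; lia.
  by rewrite eqb_id.
have [k bad_prefix] := not_dyck_bad_prefix balanced not_dyck.
have [valid_pre valid_suf] :
    all (valid_exop Nocc) (take k C) /\ all (valid_exop Nocc) (drop k C).
  by apply/andP; rewrite -all_cat cat_take_drop.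
have pre_pos : 0 < bracket_balance (paren_word (take k C)).
  by move: bad_prefix; rewrite /paren_word map_take /bracket_balance; lia.
have suf_neg : bracket_balance (paren_word (drop k C)) < 0.
  have := bracket_balance_cat (paren_word (take k C)) (paren_word (drop k C)).
  rewrite /paren_word -map_cat cat_take_drop {1}/bracket_balance balanced subrr.
  by move: pre_pos; rewrite /paren_word; lia.
rewrite /expval; have [le_kK | lt_Kk] := leqP k K.
- have [w ->] := chain_insert_prefix C r s le_kK.
  rewrite apply_word_cat; apply: shifts_virt_bra_eq0 (shifts_virt_chain_word valid_pre) _.
  by rewrite virt_vacuum.
- have [w ->] := chain_insert_suffix C r s (ltnW lt_Kk).
  rewrite apply_word_cat; apply: apply_word_zero.
  by apply: shifts_virt_ket_eq0 (shifts_virt_chain_word valid_suf) _; rewrite virt_vacuum add0r.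
Qed.
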